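(* Let $p$ be a prime and $n\ge 2$ an integer. Let $M$ be the $(n-1)\times(n-1)$ matrix, with rows and columns indexed by $1,\dots,n-1$ (index $i$ corresponding to the vertex $[p^i]$ of $\Gamma_E[\mathbb{Z}_{p^n}]$), defined by $M_{ij}=1$ if $i+j\ge n$ and $M_{ij}=0$ otherwise. Then the characteristic polynomial of $M$ is $$\det(\lambda I-M)=\sum_{k=0}^{n-1}(-1)^{\lfloor (k+1)/2\rfloor}\, b_k\,\lambda^{\,n-1-k},\qquad b_k=\binom{p_k}{k},\quad p_k=\Big\lfloor \frac{n-1+k}{2}\Big\rfloor .$$ That is, $\det(\lambda I-M)=\lambda^{n-1}-b_1\lambda^{n-2}-b_2\lambda^{n-3}+b_3\lambda^{n-4}+b_4\lambda^{n-5}-\cdots$, with the signs following the pattern $+,-,-,+,+,-,-,\dots$. For example, for $n=6$ it equals $\lambda^5-3\lambda^4-3\lambda^3+4\lambda^2+\lambda-1$.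
   Context: For a commutative ring $R$ with identity, define $x\sim y$ iff $\operatorname{ann}_R(x)=\operatorname{ann}_R(y)$. The compressed zero-divisor graph $\Gamma_E[R]$ has as vertices the equivalence classes $[x]$ of nonzero zero divisors (i.e. excluding $[0]$ and $[1]$), with two distinct classes $[x],[y]$ adjacent iff $xy=0$. For $R=\mathbb{Z}_{p^n}$ ($p$ prime) the vertices are exactly $[p],[p^2],\dots,[p^{n-1}]$, and $[p^i]\cdot[p^j]=0$ iff $i+j\ge n$. The matrix $M$ in the claim is the paper's ''adjacency matrix'' of $\Gamma_E[\mathbb{Z}_{p^n}]$: it records $[p^i][p^j]=0$ including diagonal entries (so $M_{ii}=1$ exactly when $2i\ge n$). $\lfloor\cdot\rfloor$ denotes the floor function. *)

From HB Require Import structures.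
From mathcomp Require Import all_boot all_order all_algebra.
Set Implicit Arguments. Unset Strict Implicit. Unset Printing Implicit Defensive.
Import GRing.Theory.
Local Open Scope ring_scope.

(* Adjacency matrix of the compressed zero-divisor graph of Z_{p^n}:
   row/column index i : 'I_(n-1) corresponds to vertex [p^(i+1)],
   entry is 1 iff (i+1)+(j+1) >= n, i.e. p^(i+1) * p^(j+1) = 0 in Z_{p^n}. *)
Definition zdg_adj (n : nat) : 'M[int]_(n.-1) :=
  \matrix_(i < n.-1, j < n.-1) (if (n <= i.+1 + j.+1)%N then 1 else 0).

Definition zdg_charpoly (n : nat) : {poly int} :=
  \sum_(k < n) ((-1) ^+ (k.+1)./2 * ('C((n.-1 + k)./2, k))%:R) *: 'X^(n.-1 - k).

From HB Require Import structures.
From mathcomp Require Import all_boot all_order all_algebra.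
From mathcomp Require Import zify ring.
Set Implicit Arguments. Unset Strict Implicit. Unset Printing Implicit Defensive.
Import GRing.Theory.
Local Open Scope ring_scope.

(* Consecutive columns of M differ only on the anti-diagonal, so multiplying
   λI - M on the right by the unipotent matrix 1 - S (S the superdiagonal
   shift), which takes column differences, yields λ(1 - S) - J with J the
   anti-identity.  Expanding the determinant D_m(λ) of this matrix along its
   last row gives D_(s+2)(λ) = λ^2 D_s(λ) + (-1)^s D_(s+1)(-λ); by Pascal's
   rule the claimed polynomials satisfy the same recurrence and agree with
   D_0 = 1 and D_1 = λ - 1. *)

Section ShiftMatrix.
Variable R : comNzRingType.

Definition shift_mx n : 'M[R]_n := \matrix_(i, j) (j == i.+1 :> nat)%:R.

Lemma det_1_sub_shift_mx n : \det (1%:M - shift_mx n) = 1.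
Proof.
rewrite -det_tr det_trig.
  by apply: big1 => i _; rewrite !mxE eqxx (ltn_eqF (ltnSn i)) subr0.
apply/is_trig_mxP => i j lt_ij; rewrite !mxE -val_eqE /=.
by rewrite (gtn_eqF lt_ij) (ltn_eqF (ltn_trans lt_ij (ltnSn j))) subr0.
Qed.

Lemma mulmx_shiftE m n (A : 'M[R]_(m, n.+1)) i j :
  (A *m shift_mx n.+1) i j = if j == 0 :> nat then 0 else A i (inord j.-1).
Proof.
rewrite mxE; under eq_bigr => k _ do rewrite mxE.
case: eqP => [j0 | /eqP j_gt0].
  by rewrite big1 // => k _; rewrite j0 mulr0.
have j'_lt : (j.-1 < n.+1)%N by have := ltn_ord j; lia.
rewrite (bigD1 (inord j.-1)) //= inordK // prednK ?lt0n // eqxx mulr1.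
rewrite big1 ?addr0 // => k; rewrite -val_eqE /= inordK // => /negbTE k_ne.
by case: eqP => [jk | _]; [rewrite jk /= eqxx in k_ne | rewrite mulr0].
Qed.

End ShiftMatrix.

Section BidiagAntiDeterminant.
Variable R : comNzRingType.
Implicit Types x : R.

Definition bidiag_anti_mx m x : 'M[R]_m :=
  \matrix_(i, j) ((if i == j :> nat then x else 0)
     - (if j == i.+1 :> nat then x else 0) - (if (i + j == m.-1)%N then 1 else 0)).

Lemma det_bidiag_anti_mx0 x : \det (bidiag_anti_mx 0 x) = 1.
Proof. exact: det_mx00. Qed.

Lemma det_bidiag_anti_mx1 x : \det (bidiag_anti_mx 1 x) = x - 1.
Proof. by rewrite det_mx11 !mxE /= subr0. Qed.

Lemma bidiag_anti_mx_last_row s x (j : 'I_s.+2) :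
  bidiag_anti_mx s.+2 x ord_max j
  = (if j == ord_max then x else 0) - (if j == ord0 then 1 else 0).
Proof.
rewrite mxE -!val_eqE /= addSn eqSS; have := ltn_ord j.
by move=> ?; do ![case: eqP => ?]; try lia; ring.
Qed.

Lemma bidiag_anti_mx_inner s x :
  row' ord0 (col' ord0 (row' ord_max (col' ord_max (bidiag_anti_mx s.+2 x))))
  = bidiag_anti_mx s x.
Proof.
apply/matrixP => i j; rewrite !mxE /= /bump !leq0n !add1n.
rewrite !ltnS !(leqNgt s) !ltn_ord !add0n !addSn !addnS !eqSS.
by case: s i j => [[]//|s] i j.
Qed.

Lemma det_bidiag_anti_mx_minor_last s x :
  \det (row' ord_max (col' ord_max (bidiag_anti_mx s.+2 x)))
  = x * \det (bidiag_anti_mx s x).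
Proof.
(* The first column of this minor is x times the first unit vector. *)
rewrite (expand_det_col _ ord0) (bigD1 ord0) //= big1 ?addr0; last first.
  move=> i; rewrite -val_eqE /= => /negbTE i_ne0.
  rewrite !mxE /= /bump leqNgt ltn_ord /= i_ne0 add0n (addn0 i) (ltn_eqF (ltn_ord i)).
  by rewrite !subr0 mul0r.
by rewrite /cofactor bidiag_anti_mx_inner !mxE /= !subr0 expr0 mul1r.
Qed.

Lemma bidiag_anti_mx_minor_first s x :
  row' ord_max (col' ord0 (bidiag_anti_mx s.+2 x)) = (bidiag_anti_mx s.+1 (-x))^T.
Proof.
apply/matrixP => i j; rewrite !mxE /= /bump leqNgt ltn_ord /= add0n add1n.
rewrite eqSS addnS eqSS addnC (eq_sym (j : nat)).
by case: (i == j :> nat); case: (i == j.+1 :> nat); case: (_ == s)%N; ring.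
Qed.

Lemma det_bidiag_anti_mx_rec s x :
  \det (bidiag_anti_mx s.+2 x)
  = x * (x * \det (bidiag_anti_mx s x)) + (-1) ^+ s * \det (bidiag_anti_mx s.+1 (-x)).
Proof.
rewrite (expand_det_row _ ord_max) (bigD1 ord0) //= (bigD1 ord_max) //=.
rewrite big1 ?addr0; last first.
  move=> j /andP[/negbTE j_ne0 /negbTE j_ne].
  by rewrite bidiag_anti_mx_last_row j_ne0 j_ne subr0 mul0r.
rewrite !bidiag_anti_mx_last_row /= /cofactor bidiag_anti_mx_minor_first det_tr.
have sign_even : (-1) ^+ (s.+1 + s.+1) = 1 :> R by rewrite -signr_odd oddD addbb.
rewrite det_bidiag_anti_mx_minor_last eqxx /= addn0 sign_even [_ ^+ s.+1]exprS.
ring.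
Qed.

End BidiagAntiDeterminant.

Section CharpolyFormula.
Variable R : comNzRingType.
Implicit Types x : R.

Definition charpoly_coef m k : R := (-1) ^+ (k.+1)./2 * ('C((m + k)./2, k))%:R.

Definition charpoly_formula m x := \sum_(k < m.+1) charpoly_coef m k * x ^+ (m - k).

Lemma charpoly_coef0 m : charpoly_coef m 0 = 1.
Proof. by rewrite /charpoly_coef bin0 /= mulr1. Qed.

Lemma charpoly_coef_eq0 m k : (m < k)%N -> charpoly_coef m k = 0.
Proof. by move=> lt_mk; rewrite /charpoly_coef bin_small ?mulr0 // -divn2; lia. Qed.

Lemma sign_parity a b : (a %% 2 = b %% 2)%N -> (-1) ^+ a = (-1) ^+ b :> R.
Proof. by rewrite -(signr_odd _ a) -(signr_odd _ b) -!modn2 => ->. Qed.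

Lemma charpoly_coef_pascal s k :
  charpoly_coef s.+2 k.+1 = charpoly_coef s k.+1 - (-1) ^+ k * charpoly_coef s.+1 k.
Proof.
rewrite /charpoly_coef.
have -> : (s.+2 + k.+1)./2 = ((s + k.+1)./2).+1 by rewrite !addSn.
have -> : (-1) ^+ (k.+2)./2 = (-1) ^+ (k.+1 + (k.+1)./2) :> R.
  by apply: sign_parity; rewrite -!divn2; lia.
rewrite binS natrD (addSnnS s k) exprD exprS; ring.
Qed.

Lemma charpoly_formula_widen m N x : (m < N)%N ->
  charpoly_formula m x = \sum_(k < N) charpoly_coef m k * x ^+ (m - k).
Proof.
move=> lt_mN; rewrite /charpoly_formula.
rewrite (big_ord_widen N (fun k => charpoly_coef m k * x ^+ (m - k))) // big_mkcond.
apply: eq_bigr => k _.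
by case: ltnP => // lt_mk; rewrite charpoly_coef_eq0 ?mul0r.
Qed.

Lemma charpoly_formula0 x : charpoly_formula 0 x = 1.
Proof. by rewrite /charpoly_formula big_ord1 charpoly_coef0 mulr1. Qed.

Lemma charpoly_formula1 x : charpoly_formula 1 x = x - 1.
Proof.
rewrite /charpoly_formula !big_ord_recr big_ord0 /charpoly_coef /=.
by rewrite bin0 binn expr0 expr1; ring.
Qed.

Lemma charpoly_formula_rec_term s k x : (k <= s.+1)%N ->
  charpoly_coef s.+2 k.+1 * x ^+ (s.+1 - k)
  = charpoly_coef s k.+1 * x ^+ (s - k.+1) * x * x
    + (-1) ^+ s * (charpoly_coef s.+1 k * (-x) ^+ (s.+1 - k)).
Proof.
move=> le_k; rewrite charpoly_coef_pascal [(-1) ^+ s * _]mulrCA.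
have -> : (-1) ^+ s * (-x) ^+ (s.+1 - k) = - (-1) ^+ k * x ^+ (s.+1 - k).
  by rewrite (exprNn x) mulrA -exprD (@sign_parity _ k.+1) ?exprS ?mulN1r //; lia.
case: (ltnP k s) => [lt_ks | le_sk].
  have -> : x ^+ (s.+1 - k) = x ^+ (s - k.+1) * x * x.
    by rewrite -!exprSr; congr (_ ^+ _); lia.
  ring.
rewrite charpoly_coef_eq0 ?ltnS //; ring.
Qed.

Lemma charpoly_formula_rec s x :
  charpoly_formula s.+2 x
  = x * (x * charpoly_formula s x) + (-1) ^+ s * charpoly_formula s.+1 (-x).
Proof.
have -> : charpoly_formula s.+2 x
          = x ^+ s.+2 + \sum_(k < s.+2) charpoly_coef s.+2 k.+1 * x ^+ (s.+1 - k).
  by rewrite /charpoly_formula big_ord_recl charpoly_coef0 mul1r subn0.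
have -> : x * (x * charpoly_formula s x)
          = x ^+ s.+2 + \sum_(k < s.+2) charpoly_coef s k.+1 * x ^+ (s - k.+1) * x * x.
  rewrite (@charpoly_formula_widen s s.+3); last lia.
  rewrite big_ord_recl charpoly_coef0 mul1r subn0 !mulrDr -!exprS !mulr_sumr.
  by congr (_ + _); apply: eq_bigr => k _; rewrite lift0; ring.
rewrite /charpoly_formula mulr_sumr -addrA -big_split; congr (_ + _).
by apply: eq_bigr => k _; rewrite charpoly_formula_rec_term // -ltnS.
Qed.

Lemma det_bidiag_anti_mx m x : \det (bidiag_anti_mx m x) = charpoly_formula m x.
Proof.
suff [] : (forall y, \det (bidiag_anti_mx m y) = charpoly_formula m y)
       /\ (forall y, \det (bidiag_anti_mx m.+1 y) = charpoly_formula m.+1 y) by [].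
elim: m => [|s [IH0 IH1]].
  by split=> y; rewrite ?det_bidiag_anti_mx0 ?charpoly_formula0
                        ?det_bidiag_anti_mx1 ?charpoly_formula1.
by split=> // y; rewrite det_bidiag_anti_mx_rec charpoly_formula_rec IH0 IH1.
Qed.

End CharpolyFormula.

Lemma char_poly_mx_zdg_adj_coldiff m :
  char_poly_mx (zdg_adj m.+2) *m (1%:M - shift_mx _ m.+1) = bidiag_anti_mx m.+1 'X.
Proof.
apply/matrixP => -[i lt_i] -[j lt_j].
rewrite mulmxBr mulmx1 mxE [X in _ + X]mxE mulmx_shiftE !mxE -!val_eqE /=.
have [-> | j_ne0] := eqVneq j 0%N;
  last rewrite (inordK (leq_ltn_trans (leq_pred j) lt_j)).
all: by do ![case: eqP => ? | case: ltnP => ?]; try lia;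
        rewrite ?mulr1n ?mulr0n ?polyC1 ?polyC0; ring.
Qed.

Lemma char_poly_zdg_adj m : char_poly (zdg_adj m.+2) = \det (bidiag_anti_mx m.+1 'X).
Proof.
by rewrite -char_poly_mx_zdg_adj_coldiff det_mulmx det_1_sub_shift_mx mulr1.
Qed.

Lemma zdg_charpolyE m : zdg_charpoly m.+1 = charpoly_formula m 'X.
Proof.
apply: eq_bigr => k _.
by rewrite /charpoly_coef -mul_polyC rmorphM rmorphXn rmorphN1 rmorph_nat.
Qed.

Theorem theorem3p1 (p n : nat) (hp : prime p) (hn : (2 <= n)%N) :
  char_poly (zdg_adj n) = zdg_charpoly n.
Proof.
case: n hn => [|[|m]] // _.
by rewrite char_poly_zdg_adj det_bidiag_anti_mx zdg_charpolyE.
Qed.
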